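(* Let $f:\mathbb{R}^d\to\mathbb{R}$, let $h:\mathbb{R}^d\to\mathbb{R}\cup\{+\infty\}$, and let $g:\mathbb{R}^d\to\mathbb{R}$ be $l$-Lipschitz continuous. Let $\lambda>0$, and suppose that for every $w$ the minimum of $x\mapsto\frac{1}{2\lambda}\|w-x\|_2^2+g(x)$ is attained; let $e_\lambda g(w)=\min_x\left(\frac{1}{2\lambda}\|w-x\|_2^2+g(x)\right)$. Let $\Phi=f+g+h$ and $\tilde\Phi_\lambda=f+e_\lambda g+h$. Let $w^*$ be a global minimizer of $\Phi$ and $w^*_\lambda$ a global minimizer of $\tilde\Phi_\lambda$. Then for all $w$ (with $\Phi(w)$ finite), $$\tilde\Phi_\lambda(w)-\tilde\Phi_\lambda(w^*_\lambda)\le\Phi(w)-\Phi(w^* )+\frac{l^2\lambda}{2}.$$ *)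

From HB Require Import structures.
From mathcomp Require Import all_boot all_order all_algebra.
From mathcomp Require Import all_classical all_reals.
From mathcomp Require Import ereal.
Set Implicit Arguments. Unset Strict Implicit. Unset Printing Implicit Defensive.
Import Order.TTheory GRing.Theory Num.Theory.
Local Open Scope ring_scope.

Definition norm2 (R : realType) (d : nat) (v : 'rV[R]_d) : R :=
  Num.sqrt (\sum_(i < d) (v ord0 i) ^+ 2).

Definition moreau_obj (R : realType) (d : nat) (lam : R) (g : 'rV[R]_d -> R)
  (w x : 'rV[R]_d) : R :=
  (2 * lam)^-1 * (norm2 (w - x)) ^+ 2 + g x.

Definition lipschitz (R : realType) (d : nat) (l : R) (g : 'rV[R]_d -> R) : Prop :=
  forall x y, `|g x - g y| <= l * norm2 (x - y).

Definition is_moreau_envelope (R : realType) (d : nat) (lam : R)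
  (g : 'rV[R]_d -> R) (e : 'rV[R]_d -> R) : Prop :=
  forall w, (exists x, e w = moreau_obj lam g w x) /\
            (forall x, e w <= moreau_obj lam g w x).

From HB Require Import structures.
From mathcomp Require Import all_boot all_order all_algebra.
From mathcomp Require Import all_classical all_reals.
From mathcomp Require Import ereal.
From mathcomp Require Import ring lra.
Import Order.TTheory GRing.Theory Num.Theory.
Local Open Scope ring_scope.

(* Taking x = w in the envelope gives e_lambda g <= g, while the
   Lipschitz bound g w - g x <= l |w - x| and Young's inequality
   l t <= t^2/(2 lambda) + l^2 lambda/2 give g - l^2 lambda/2 <= e_lambda g.
   So the smoothed objective lies between Phi - l^2 lambda/2 and Phi, and
   comparing the two minimal values yields the bound. *)

Lemma mul_le_sqr_add {R : realFieldType} (l t : R) {lam : R} : 0 < lam ->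
  l * t <= (2 * lam)^-1 * t ^+ 2 + l ^+ 2 * lam / 2.
Proof.
move=> lam_gt0; rewrite -subr_ge0.
have -> : (2 * lam)^-1 * t ^+ 2 + l ^+ 2 * lam / 2 - l * t =
          (2 * lam)^-1 * (t - l * lam) ^+ 2.
  by field; rewrite ?pnatr_eq0 ?gt_eqF.
by rewrite mulr_ge0 ?sqr_ge0 // invr_ge0 mulr_ge0 // ltW.
Qed.

Lemma norm2_0 {R : realType} {d : nat} : norm2 (0 : 'rV[R]_d) = 0.
Proof.
rewrite /norm2 big1 ?sqrtr0 // => i _.
by rewrite mxE expr0n.
Qed.

Section MoreauEnvelope.
Context {R : realType} {d : nat} {lam : R} {g e : 'rV[R]_d -> R}.
Hypothesis env_e : is_moreau_envelope lam g e.

Lemma moreau_envelope_le w : e w <= g w.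
Proof.
have [_ /(_ w)] := env_e w.
by rewrite /moreau_obj subrr norm2_0 expr0n mulr0 add0r.
Qed.

Lemma moreau_envelope_ge {l : R} : lipschitz l g -> 0 < lam ->
  forall w, g w <= e w + l ^+ 2 * lam / 2.
Proof.
move=> lip_g lam_gt0 w; have [[x ->] _] := env_e w; rewrite /moreau_obj.
have lip_wx : g w - g x <= l * norm2 (w - x).
  exact: le_trans (ler_norm _) (lip_g w x).
have := mul_le_sqr_add l (norm2 (w - x)) lam_gt0.
lra.
Qed.

End MoreauEnvelope.

Local Open Scope ereal_scope.

(* No finiteness hypothesis is needed, since addition on \bar R is monotone
   in both arguments (-oo is absorbing); this is why mainTheorem4 never uses
   [h x != -oo] nor the finiteness of [Phi w]. *)
Lemma min_gap_le_of_sandwich (T : Type) (R : realDomainType)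
    (F G : T -> \bar R) (c : R) (xF xG : T) :
  (forall x, G x <= F x) -> (forall x, F x <= G x + c%:E) ->
  (forall x, F xF <= F x) -> (forall x, G xG <= G x) ->
  forall x, G x - G xG <= F x - F xF + c%:E.
Proof.
move=> GleF FleG minF minG x.
have FxF_le : F xF - c%:E <= G xG.
  by rewrite leeBlDr //; apply: le_trans (minF xG) (FleG xG).
by rewrite -addeA -fin_num_oppeB //; exact: leeB.
Qed.

Theorem mainTheorem4 (R : realType) (d : nat)
  (f g : 'rV[R]_d -> R) (h : 'rV[R]_d -> \bar R) (l lam : R)
  (e : 'rV[R]_d -> R) (wstar wstarlam : 'rV[R]_d) :
  (forall x, h x != -oo) ->
  lipschitz l g ->
  (0 < lam)%R ->
  is_moreau_envelope lam g e ->
  let Phi := fun w => (f w + g w)%:E + h w in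
  let Phit := fun w => (f w + e w)%:E + h w in
  (forall w, Phi wstar <= Phi w) ->
  (forall w, Phit wstarlam <= Phit w) ->
  forall w, Phi w \is a fin_num ->
    Phit w - Phit wstarlam <= Phi w - Phi wstar + (l ^+ 2 * lam / 2)%:E.
Proof.
move=> _ lip_g lam_gt0 env_e Phi Phit min_Phi min_Phit w _.
apply: min_gap_le_of_sandwich min_Phi min_Phit w => x.
- apply: leeD => //; rewrite lee_fin lerD2l.
  exact: moreau_envelope_le env_e x.
- rewrite /Phi /Phit addeAC -EFinD; apply: leeD => //; rewrite lee_fin.
  by rewrite -addrA lerD2l (moreau_envelope_ge env_e lip_g lam_gt0).
Qed.
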